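(* There is no odd perfect number of the form $n = 5^{\alpha} M^{2\beta}$, where $\alpha$ and $\beta$ are positive integers and $M$ is a square-free positive integer with $5 \nmid M$.
   Context: A positive integer $n$ is perfect if $\sigma(n) = 2n$, where $\sigma(n)$ denotes the sum of all positive divisors of $n$. *)

From mathcomp Require Import all_boot.
Set Implicit Arguments. Unset Strict Implicit. Unset Printing Implicit Defensive.

Definition sigma (n : nat) : nat := \sum_(d <- divisors n) d.

Definition perfect (n : nat) : Prop := 0 < n /\ sigma n = 2 * n.

Definition squarefree (m : nat) : Prop := forall p, prime p -> ~~ (p ^ 2 %| m).

From mathcomp Require Import all_boot zify.
Set Implicit Arguments. Unset Strict Implicit. Unset Printing Implicit Defensive.

(* Write N = 2 beta.  As sigma is multiplicative and M is squarefree, sigma (M ^ N)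
   is the product of the sigma (q ^ N) = 1 + q + ... + q ^ N over the primes q | M;
   each factor is odd, and prime to 5 unless 5 | N + 1.  Since
   sigma (5 ^ alpha) = 1 (mod 5) while 5 | sigma n = 2 n, we get 5 | N + 1; parity
   forces alpha odd, so 6 = sigma 5 | sigma (5 ^ alpha) and 3 | M; then
   121 = sigma (3 ^ 4) | sigma (3 ^ N) gives 11 | M, and
   5 * 3221 = sigma (11 ^ 4) | sigma (11 ^ N) gives 3221 | M.  If alpha = 1 then
   3 sigma (M ^ N) = 5 M ^ N, although 25 | sigma (11 ^ N) sigma (3221 ^ N), which
   divides sigma (M ^ N).  If alpha >= 2, the abundancy sigma n / n is at least
   (31/25) (121/81) (12/11) > 2. *)

Lemma sigma1 : sigma 1 = 1.
Proof. by rewrite /sigma (_ : divisors 1 = [:: 1]) ?big_seq1. Qed.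

Lemma leq_sigma m : 0 < m -> m <= sigma m.
Proof. by move=> m_gt0; rewrite /sigma (big_rem m) ?divisors_id ?leq_addr. Qed.

Section Multiplicativity.

Variables a b : nat.
Hypothesis coprime_ab : coprime a b.

Lemma gcdn_mul_divisor x y : x %| a -> y %| b -> gcdn (x * y) a = x.
Proof.
move=> x_a y_b; rewrite gcdnC Gauss_gcdl; first exact/gcdn_idPr.
exact: coprime_dvdr y_b coprime_ab.
Qed.

Lemma dvdn_mul_gcdn d : d %| a * b -> d = gcdn d a * gcdn d b.
Proof.
move=> d_ab; apply/eqP; rewrite eqn_dvd; apply/andP; split.
  rewrite muln_gcdl !muln_gcdr !dvdn_gcd.
  by apply/and3P; split; [rewrite !dvdn_mulr | rewrite dvdn_mull |].
rewrite Gauss_dvd ?dvdn_gcdl //.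
exact: coprime_dvdl (dvdn_gcdr _ _) (coprime_dvdr (dvdn_gcdr _ _) coprime_ab).
Qed.

Lemma perm_divisorsM : 0 < a -> 0 < b ->
  perm_eq (divisors (a * b)) [seq x * y | x <- divisors a, y <- divisors b].
Proof.
move=> a_gt0 b_gt0; apply: uniq_perm; first exact: divisors_uniq.
  apply: allpairs_uniq; try exact: divisors_uniq.
  move=> [x y] [x' y'] /allpairsP[[x1 y1] [+ + [-> ->]]] /allpairsP[[x2 y2] [+ + [-> ->]]] /=.
  rewrite -!dvdn_divisors //= => x1_a y1_b x2_a y2_b eq_xy.
  have eq_x : x1 = x2.
    by rewrite -(gcdn_mul_divisor x1_a y1_b) eq_xy (gcdn_mul_divisor x2_a y2_b).
  rewrite -eq_x in eq_xy *; congr pair; apply/eqP.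
  by rewrite -(eqn_pmul2l (dvdn_gt0 a_gt0 x1_a)) eq_xy.
move=> d; rewrite -dvdn_divisors ?muln_gt0 ?a_gt0 //.
apply/idP/allpairsP => [d_ab | [[x y] [x_a y_b ->]]].
  exists (gcdn d a, gcdn d b); rewrite -!dvdn_divisors ?dvdn_gcdr //.
  by split=> //; apply: dvdn_mul_gcdn.
by rewrite /= dvdn_mul // dvdn_divisors.
Qed.

Lemma sigmaM : sigma (a * b) = sigma a * sigma b.
Proof.
have [a0 | a_gt0] := posnP a.
  by move: coprime_ab; rewrite a0 /coprime gcd0n => /eqP->; rewrite sigma1 !muln1.
have [b0 | b_gt0] := posnP b.
  by move: coprime_ab; rewrite b0 /coprime gcdn0 => /eqP->; rewrite sigma1 !mul1n.
rewrite /sigma (perm_big _ (perm_divisorsM a_gt0 b_gt0)) big_distrl /=.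
rewrite -(map_allpairs (uncurry muln) pair) big_map big_allpairs.
by apply: eq_bigr => x _; rewrite big_distrr.
Qed.

End Multiplicativity.

Lemma sigma_primeX p k : prime p -> sigma (p ^ k) = \sum_(i < k.+1) p ^ i.
Proof.
move=> p_pr; rewrite /sigma (perm_big [seq p ^ i | i <- iota 0 k.+1]).
  by rewrite big_map -(big_mkord xpredT (fun i => p ^ i)).
apply: uniq_perm; first exact: divisors_uniq.
  by rewrite map_inj_uniq ?iota_uniq //; apply: expnI; apply: prime_gt1.
move=> d; rewrite -dvdn_divisors ?expn_gt0 ?prime_gt0 //.
apply/idP/mapP => [/(dvdn_pfactor _ _ p_pr)[i i_le_k ->] | [i + ->]].
  by exists i; rewrite // mem_iota.
by rewrite mem_iota => /andP[_ i_lt]; apply/dvdn_pfactor => //; exists i.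
Qed.

Lemma predn_exp_sigma p k : prime p -> (p ^ k.+1).-1 = p.-1 * sigma (p ^ k).
Proof. by move=> p_pr; rewrite sigma_primeX // predn_exp. Qed.

Lemma sigma_primeX_mod p k m : prime p -> p = 1 %[mod m] ->
  sigma (p ^ k) = k.+1 %[mod m].
Proof.
move=> p_pr p_mod; rewrite sigma_primeX //; elim: k.+1 => [|i IHi].
  by rewrite big_ord0.
by rewrite big_ord_recr /= -modnDm IHi -modnXm p_mod modnXm exp1n modnDm addn1.
Qed.

Lemma sigma_primeX_dvd p k j : prime p -> k.+1 %| j.+1 ->
  sigma (p ^ k) %| sigma (p ^ j).
Proof.
move=> p_pr /dvdnP[t j1_eq]; have p1_gt0 : 0 < p.-1.
  by have := prime_gt1 p_pr; lia.
rewrite -(dvdn_pmul2l p1_gt0) -!predn_exp_sigma // j1_eq mulnC expnM.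
by rewrite (predn_exp (p ^ k.+1)) dvdn_mulr.
Qed.

Lemma sigma_primeX_lbound p k m : prime p -> m <= p ^ k ->
  (p * m).-1 * p ^ k <= p.-1 * m * sigma (p ^ k).
Proof.
move=> p_pr m_le; rewrite mulnAC -predn_exp_sigma // expnS.
move: (p ^ k) m_le (prime_gt1 p_pr) => x; nia.
Qed.

Lemma odd_sigma_primeX p k : prime p -> odd p -> ~~ odd k -> odd (sigma (p ^ k)).
Proof.
move=> p_pr p_odd k_even; have p_mod2 : p = 1 %[mod 2] by rewrite modn2 p_odd.
by move: (sigma_primeX_mod k p_pr p_mod2); rewrite !modn2 /= k_even; case: odd.
Qed.

Lemma expn_odd_eq1_mod5 q e : ~~ (5 %| q) -> odd e ->
  q ^ e = 1 %[mod 5] -> q = 1 %[mod 5].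
Proof.
move=> q_n5 e_odd; have q4_mod5 : q ^ 4 = 1 %[mod 5].
  rewrite -modnXm; move: q_n5 (ltn_pmod q (isT : 0 < 5)); rewrite /dvdn.
  by case: (q %% 5) => [|[|[|[|[|]]]]].
have -> : q ^ e = (q ^ 4) ^ (e %/ 4) * q ^ (e %% 4).
  by rewrite -expnM -expnD mulnC -divn_eq.
rewrite -modnMml -modnXm q4_mod5 modnXm exp1n mul1n.
have : e %% 4 \in [:: 1; 3].
  move: e_odd; rewrite -(@odd_mod e 4) //.
  by case: (e %% 4) (ltn_pmod e (isT : 0 < 4)) => [|[|[|[|]]]].
rewrite !inE => /orP[]/eqP-> // q3_mod5.
by rewrite -q4_mod5 expnS -modnMmr q3_mod5 modnMmr muln1.
Qed.

Lemma five_ndvd_sigma_primeX q k : prime q -> q != 5 -> ~~ odd k ->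
  ~~ (5 %| k.+1) -> ~~ (5 %| sigma (q ^ k)).
Proof.
(* 5 | sigma (q ^ k) makes q ^ k.+1 = 1 (mod 5), hence q = 1 and sigma (q ^ k) = k.+1. *)
move=> q_pr q_neq5 k_even k1_n5; apply: contra k1_n5 => sigma_5.
have q_n5 : ~~ (5 %| q) by rewrite dvdn_prime2 // eq_sym.
have q_mod5 : q = 1 %[mod 5].
  apply: (expn_odd_eq1_mod5 (e := k.+1) q_n5 k_even).
  have qk1_gt0 : 0 < q ^ k.+1 by rewrite expn_gt0 prime_gt0.
  have : 5 %| (q ^ k.+1).-1 by rewrite predn_exp_sigma // dvdn_mull.
  by move: qk1_gt0; rewrite /dvdn; lia.
by rewrite /dvdn -(sigma_primeX_mod k q_pr q_mod5).
Qed.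

Lemma squarefree_gt0 M : squarefree M -> 0 < M.
Proof. by case: M => [|//] /(_ 2 isT); rewrite dvdn0. Qed.

Lemma squarefree_coprime_divn M d : squarefree M -> d %| M -> coprime d (M %/ d).
Proof.
move=> M_sqf d_M; have M_gt0 := squarefree_gt0 M_sqf.
have d_gt0 : 0 < d := dvdn_gt0 M_gt0 d_M.
have Md_gt0 : 0 < M %/ d by rewrite divn_gt0 // dvdn_leq.
rewrite coprime_has_primes //; apply/hasPn => p.
rewrite !mem_primes => /and3P[p_pr _ p_Md]; apply/negP => /and3P[_ _ p_d].
by have := M_sqf p p_pr; rewrite -(divnK d_M) -mulnn dvdn_mul.
Qed.

Lemma sigmaX_squarefree_divn M d N : squarefree M -> d %| M ->
  sigma (M ^ N) = sigma (d ^ N) * sigma ((M %/ d) ^ N).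
Proof.
move=> M_sqf d_M; rewrite -sigmaM; first by rewrite -expnMn mulnC divnK.
by rewrite coprimeXl ?coprimeXr ?squarefree_coprime_divn.
Qed.

Lemma squarefree_prod_primes M : squarefree M -> M = \prod_(p <- primes M) p.
Proof.
move=> M_sqf; have M_gt0 := squarefree_gt0 M_sqf.
rewrite {1}(prod_prime_decomp M_gt0) prime_decompE big_map /=.
apply: eq_big_seq => p p_M; rewrite -[RHS]expn1; congr (_ ^ _).
have p_pr : prime p by move: p_M; rewrite mem_primes => /andP[].
by apply/eqP; rewrite eqn_leq logn_gt0 p_M andbT leqNgt -pfactor_dvdn // M_sqf.
Qed.

Lemma sigmaX_prod_primes s N : uniq s -> all prime s ->
  sigma ((\prod_(p <- s) p) ^ N) = \prod_(p <- s) sigma (p ^ N).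
Proof.
elim: s => [|p s IHs]; first by rewrite !big_nil exp1n sigma1.
rewrite /= => /andP[p_s s_uniq] /andP[p_pr s_pr]; rewrite !big_cons expnMn sigmaM ?IHs //.
rewrite coprimeXl ?coprimeXr // prime_coprime // Euclid_dvd_prod // big_has.
apply/hasPn => q q_s; rewrite /= (dvdn_prime2 p_pr (allP s_pr q q_s)).
by apply: contraNneq p_s => ->.
Qed.

Lemma sigmaX_squarefree M N : squarefree M ->
  sigma (M ^ N) = \prod_(p <- primes M) sigma (p ^ N).
Proof.
move=> M_sqf; rewrite {1}(squarefree_prod_primes M_sqf).
by rewrite sigmaX_prod_primes ?primes_uniq //; apply/allP => p; rewrite mem_primes => /andP[].
Qed.

Lemma prime_ndvd_sigmaX_squarefree r M N : prime r -> squarefree M ->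
  {in primes M, forall p, ~~ (r %| sigma (p ^ N))} -> ~~ (r %| sigma (M ^ N)).
Proof.
by move=> r_pr M_sqf r_n; rewrite sigmaX_squarefree // Euclid_dvd_prod // big_has; apply/hasPn.
Qed.

Section FivePowerTimesSquare.

Variables alpha N M : nat.
Hypotheses (alpha_gt0 : 0 < alpha) (N_gt0 : 0 < N) (N_even : ~~ odd N).
Hypotheses (M_sqf : squarefree M) (M_odd : odd M) (M_n5 : ~~ (5 %| M)).
Hypothesis sigma_eq : sigma (5 ^ alpha) * sigma (M ^ N) = 2 * (5 ^ alpha * M ^ N).

Lemma prime_dvd_sigma_dvdM r : prime r -> r != 2 -> r != 5 ->
  r %| sigma (5 ^ alpha) * sigma (M ^ N) -> r %| M.
Proof.
move=> r_pr r_neq2 r_neq5; rewrite sigma_eq !Euclid_dvdM ?Euclid_dvdX //.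
rewrite (dvdn_prime2 r_pr (isT : prime 2)) (dvdn_prime2 r_pr (isT : prime 5)).
by rewrite (negbTE r_neq2) (negbTE r_neq5) => /andP[].
Qed.

Lemma sigmaX_dvd_sigmaM q : q %| M -> sigma (q ^ N) %| sigma (M ^ N).
Proof. by move=> q_M; rewrite (sigmaX_squarefree_divn N M_sqf q_M) dvdn_mulr. Qed.

Lemma five_dvd_N1 : 5 %| N.+1.
Proof.
have sigma5_n5 : ~~ (5 %| sigma (5 ^ alpha)).
  have := predn_exp_sigma alpha (isT : prime 5); rewrite expnS.
  by move: (sigma _) (expn_gt0 5 alpha) => s; lia.
apply: contraT => N1_n5.
have sigmaM_n5 : ~~ (5 %| sigma (M ^ N)).
  apply: prime_ndvd_sigmaX_squarefree => // p; rewrite mem_primes => /and3P[p_pr _ p_M].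
  by apply: five_ndvd_sigma_primeX => //; apply: contraNneq M_n5 => <-.
have : 5 %| sigma (5 ^ alpha) * sigma (M ^ N).
  by rewrite sigma_eq dvdn_mull // dvdn_mulr // dvdn_exp.
by rewrite Euclid_dvdM // (negbTE sigma5_n5) (negbTE sigmaM_n5).
Qed.

Lemma odd_alpha : odd alpha.
Proof.
have sigmaM_odd : odd (sigma (M ^ N)).
  rewrite -[odd _]negbK -dvdn2; apply: prime_ndvd_sigmaX_squarefree => // p.
  rewrite mem_primes dvdn2 negbK => /and3P[p_pr _ p_M].
  apply: odd_sigma_primeX => //; apply: contraLR M_odd.
  by rewrite -!dvdn2 => /dvdn_trans; apply.
have sigma5_even : ~~ odd (sigma (5 ^ alpha)).
  by move: (congr1 odd sigma_eq); rewrite !oddM sigmaM_odd andbT /= => ->.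
move: (@sigma_primeX_mod 5 alpha 2 isT erefl).
by rewrite !modn2 /= (negbTE sigma5_even); case: odd.
Qed.

Lemma three_dvd_M : 3 %| M.
Proof.
apply: prime_dvd_sigma_dvdM => //; apply: dvdn_mulr.
have sigma5_dvd : sigma (5 ^ 1) %| sigma (5 ^ alpha).
  by apply: sigma_primeX_dvd; rewrite // dvdn2 /= odd_alpha.
by apply: dvdn_trans sigma5_dvd; rewrite (@sigma_primeX 5 1 isT) !big_ord_recr big_ord0.
Qed.

Lemma eleven_dvd_M : 11 %| M.
Proof.
apply: prime_dvd_sigma_dvdM => //; apply: dvdn_mull.
apply: dvdn_trans (sigmaX_dvd_sigmaM three_dvd_M).
have sigma3_dvd : sigma (3 ^ 4) %| sigma (3 ^ N) by apply: (sigma_primeX_dvd _ five_dvd_N1).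
by apply: dvdn_trans sigma3_dvd; rewrite (@sigma_primeX 3 4 isT) !big_ord_recr big_ord0.
Qed.

Lemma sigma11X_dvd : 5 * 3221 %| sigma (11 ^ N).
Proof.
have sigma11_4 : sigma (11 ^ 4) = 5 * 3221.
  by rewrite (@sigma_primeX 11 4 isT) !big_ord_recr big_ord0 /=; lia.
by rewrite -sigma11_4; apply: (sigma_primeX_dvd _ five_dvd_N1).
Qed.

Lemma p3221_dvd_M : 3221 %| M.
Proof.
apply: (prime_dvd_sigma_dvdM (isT : prime 3221) isT isT); apply: dvdn_mull.
apply: dvdn_trans (sigmaX_dvd_sigmaM eleven_dvd_M).
exact: dvdn_trans (dvdn_mull 5 (dvdnn 3221)) sigma11X_dvd.
Qed.

Lemma five_sq_dvd_sigmaM : 5 * 5 %| sigma (M ^ N).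
Proof.
have coprime_11_3221 : coprime 11 3221 by vm_compute.
have d_M : 11 * 3221 %| M by rewrite (Gauss_dvd M coprime_11_3221) eleven_dvd_M p3221_dvd_M.
apply: dvdn_trans (sigmaX_dvd_sigmaM d_M).
rewrite expnMn (sigmaM (coprimeXl N (coprimeXr N coprime_11_3221))); apply: dvdn_mul.
  exact: dvdn_trans (dvdn_mulr 3221 (dvdnn 5)) sigma11X_dvd.
rewrite /dvdn (@sigma_primeX_mod 3221 N 5 isT erefl).
exact: five_dvd_N1.
Qed.

Lemma alpha_neq1 : alpha != 1.
Proof.
apply/eqP => alpha1; move: sigma_eq five_sq_dvd_sigmaM.
rewrite alpha1 (@sigma_primeX 5 1 isT) !big_ord_recr big_ord0 /=.
move: (sigma _) => s s_eq s_25; have : 5 %| M ^ N by move: (M ^ N) s_eq s_25 => x; lia.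
by rewrite Euclid_dvdX // (negbTE M_n5).
Qed.

Lemma sigma_eq_absurd : False.
Proof.
have alpha_ge2 : 2 <= alpha by move: alpha_gt0 alpha_neq1; lia.
have N_ge4 : 4 <= N by move: N_gt0 five_dvd_N1; lia.
have d_M : 3 * 11 %| M by rewrite Gauss_dvd // three_dvd_M eleven_dvd_M.
set R := M %/ (3 * 11).
have R_gt0 : 0 < R by rewrite divn_gt0 // dvdn_leq // squarefree_gt0.
have M_eq : M ^ N = 3 ^ N * 11 ^ N * R ^ N.
  by rewrite -{1}(divnK d_M) mulnC !expnMn.
have sigmaM_eq : sigma (M ^ N) = sigma (3 ^ N) * sigma (11 ^ N) * sigma (R ^ N).
  by rewrite (sigmaX_squarefree_divn N M_sqf d_M) expnMn sigmaM ?coprimeXl ?coprimeXr.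
have bound5 := @sigma_primeX_lbound 5 alpha 25 isT (leq_pexp2l (isT : 0 < 5) alpha_ge2).
have bound3 := @sigma_primeX_lbound 3 N 81 isT (leq_pexp2l (isT : 0 < 3) N_ge4).
have bound11 := @sigma_primeX_lbound 11 N 11 isT (leq_pexp2l (isT : 0 < 11) N_gt0).
have boundR : R ^ N <= sigma (R ^ N) by rewrite leq_sigma // expn_gt0 R_gt0.
have prod_gt0 : 0 < 5 ^ alpha * 3 ^ N * 11 ^ N * R ^ N by rewrite !muln_gt0 !expn_gt0 R_gt0.
have := leq_mul (leq_mul (leq_mul bound5 bound3) bound11) boundR.
by move: sigma_eq prod_gt0; rewrite sigmaM_eq M_eq; lia.
Qed.

End FivePowerTimesSquare.

Theorem theorem1p2 (n alpha beta M : nat) :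
  0 < alpha -> 0 < beta -> 0 < M -> squarefree M -> ~~ (5 %| M) ->
  n = 5 ^ alpha * M ^ (2 * beta) ->
  ~ (odd n /\ perfect n).
Proof.
move=> alpha_gt0 beta_gt0 _ M_sqf M_n5 -> [n_odd [_ sigma_n]].
have N_gt0 : 0 < 2 * beta by rewrite muln_gt0 beta_gt0.
have M_odd : odd M.
  by move: n_odd; rewrite oddM [odd (M ^ _)]oddX (gtn_eqF N_gt0) => /andP[].
have N_even : ~~ odd (2 * beta) by rewrite oddM.
rewrite sigmaM ?coprimeXl ?coprimeXr ?prime_coprime // in sigma_n.
exact: sigma_eq_absurd alpha_gt0 N_gt0 N_even M_sqf M_odd M_n5 sigma_n.
Qed.
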